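(* For every integer $n\ge 1$, the origami flip graph ${\rm OFG}(M_{2,n})$ of the $2\times n$ Miura-ori has exactly $2\cdot 3^{n-1}$ vertices.
   Context: The $2\times n$ Miura-ori $M_{2,n}$ ($n\ge 1$) is the crease pattern made of $2$ rows and $n$ columns of congruent parallelograms, with faces $\alpha_{i,j}$ ($i\in\{1,2\}$ the row, $j\in\{1,\dots,n\}$ the column). Its interior vertices are $x_1,\dots,x_{n-1}$ (on the middle line, left to right) and its creases are $e_0$ together with $e_{3k-1},e_{3k},e_{3k+1}$ for $k=1,\dots,n-1$ (so $3n-2$ creases; we write $e_0$ also as $e_{3\cdot 1-3}$). At $x_k$ the incident creases are: left $e_{3k-3}$, top $e_{3k-1}$, right $e_{3k}$, bottom $e_{3k+1}$; the two sector angles adjacent to the left crease are obtuse, the other two are acute. Face $\alpha_{1,j}$ is bordered by those of $e_{3j-4}$ (present iff $j\ge2$), $e_{3j-3}$, $e_{3j-1}$ (present iff $j\le n-1$); face $\alpha_{2,j}$ is bordered by those of $e_{3j-2}$ (present iff $j\ge 2$), $e_{3j-3}$, $e_{3j+1}$ (present iff $j\le n-1$). A mountain–valley (MV) assignment is a map $\mu$ from the creases to $\{1,-1\}$ ($1$ = mountain $M$, $-1$ = valley $V$). It is locally valid if for every $k=1,\dots,n-1$ exactly one of $\mu(e_{3k-1}),\mu(e_{3k}),\mu(e_{3k+1})$ differs from $\mu(e_{3k-3})$ (equivalently: at each vertex three creases have one parity and one the other, and the minority crease is not the one between the two obtuse angles). The face flip of $\alpha$ turns $\mu$ into $\mu_\alpha$,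 which negates $\mu$ on the creases bordering $\alpha$ and agrees with $\mu$ elsewhere; $\alpha$ is flippable under $\mu$ if both $\mu$ and $\mu_\alpha$ are locally valid. ${\rm OFG}(M_{2,n})$ is the graph whose vertices are the locally valid MV assignments of $M_{2,n}$, with $\mu\sim\mu_\alpha$ whenever $\alpha$ is flippable under $\mu$. *)

From mathcomp Require Import all_boot.
Set Implicit Arguments. Unset Strict Implicit. Unset Printing Implicit Defensive.

(* Creases of M_{2,n}: e_c for c in {0} U {2,...,3n-2}.  We index them by
   naturals c < 3n-1 with c <> 1. *)
Definition crease (n : nat) := {c : 'I_(3 * n - 1) | val c != 1}.

(* An MV assignment: a map from creases to {1,-1}; coded as booleans,
   true = 1 = mountain M, false = -1 = valley V. *)
Definition mvassign (n : nat) := {ffun crease n -> bool}.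

(* value of mu at the crease e_c (c a crease index); [false] if there is no
   crease e_c, which never happens at the indices used below. *)
Definition mu_at (n : nat) (mu : mvassign n) (c : nat) : bool :=
  if [pick e : crease n | val (val e) == c] is Some e then mu e else false.

Definition locally_valid (n : nat) (mu : mvassign n) : bool :=
  [forall k : 'I_n, (0 < k) ==>
     (count (fun c => mu_at mu c != mu_at mu (3 * k - 3))
        [:: 3 * k - 1; 3 * k; 3 * k + 1] == 1)].

Definition face_border (n i j c : nat) : bool :=
  if i == 1 then
    [|| (2 <= j) && (c == 3 * j - 4), c == 3 * j - 3 | (j <= n - 1) && (c == 3 * j - 1)]
  else
    [|| (2 <= j) && (c == 3 * j - 2), c == 3 * j - 3 | (j <= n - 1) && (c == 3 * j + 1)].

Definition face_flip (n i j : nat) (mu : mvassign n) : mvassign n :=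
  [ffun e : crease n => if face_border n i j (val (val e)) then ~~ mu e else mu e].

Definition OFG_vertices (n : nat) : {set mvassign n} :=
  [set mu | locally_valid mu].

Definition OFG_edge (n : nat) : rel (mvassign n) :=
  fun mu nu =>
    locally_valid mu &&
    [exists i : 'I_2, exists j : 'I_n,
       let mu' := face_flip i.+1 j.+1 mu in locally_valid mu' && (nu == mu')].

(* An MV assignment is determined by its value on e_0 and, at each
   vertex x_k, its values on the top, right and bottom creases; the right crease
   of x_k is the left crease of x_(k+1).  Local validity at x_k only asks that
   exactly one of these three values differ from the value on the left crease,
   so whatever happens at x_1, ..., x_(k-1) there are exactly 3 valid choices
   at x_k, and 2 choices for e_0. *)

From mathcomp Require Import all_boot zify.
Set Implicit Arguments. Unset Strict Implicit. Unset Printing Implicit Defensive.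

Lemma count_allpairs (S T U : Type) (f : S -> T -> U) (P : pred U) s t :
  count P [seq f x y | x <- s, y <- t] = \sum_(x <- s) count (fun y => P (f x y)) t.
Proof. by elim: s => [|x s IHs]; rewrite ?big_nil // big_cons count_cat count_map IHs. Qed.

Lemma card_preim_count (T : finType) (U : eqType) (f : T -> U) (g : U -> T)
    (t : seq U) (Q : pred U) :
  injective f -> uniq t -> (forall x, f x \in t) -> {in t, cancel g f} ->
  #|preim f Q| = count Q t.
Proof.
move=> f_inj t_uniq f_t gK.
have /permP <- : perm_eq (map f (enum T)) t.
  apply: uniq_perm => [|//|u]; first by rewrite map_inj_uniq ?enum_uniq.
  apply/mapP/idP => [[x _ ->] // | t_u].
  by exists (g u); rewrite ?mem_enum ?gK.
by rewrite count_map -sum1_count big_enum_cond sum1_card.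
Qed.

Lemma forall_ord_gt0_iota (n : nat) (P : pred nat) :
  [forall k : 'I_n, (0 < k) ==> P k] = all P (iota 1 n.-1).
Proof.
apply/forallP/allP => [P_ord k | P_iota k].
  rewrite mem_iota => /andP[k_gt0 k_lt]; have k_ltn : k < n by lia.
  by have /implyP := P_ord (Ordinal k_ltn); apply.
by apply/implyP => k_gt0; apply: P_iota; rewrite mem_iota k_gt0; have := ltn_ord k; lia.
Qed.

Section Words.
Variables (T : eqType) (A : seq T).

Fixpoint words (m : nat) : seq (seq T) :=
  if m is m'.+1 then [seq x :: s | x <- A, s <- words m'] else [:: [::]].

Lemma mem_words m s : (s \in words m) = (size s == m) && all (mem A) s.
Proof.
elim: m s => [|m IHm] [|x s] //=.
  by case: allpairsP => // -[[y s'] []].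
rewrite eqSS andbCA -IHm.
apply/allpairsP/andP => [[[y s'] [/= Ay ws' [-> ->]]] // | [Ax ws]].
by exists (x, s).
Qed.

Lemma words_uniq m : uniq A -> uniq (words m).
Proof.
move=> A_uniq; elim: m => //= m IHm; apply: allpairs_uniq => //.
by move=> [x s] [y s'] _ _ [/= -> ->].
Qed.

Lemma count_wordsS (P : pred (seq T)) m :
  count P (words m.+1) = \sum_(x <- A) count (fun s => P (x :: s)) (words m).
Proof. exact: count_allpairs. Qed.

End Words.

Notation bools := [:: true; false].

Lemma all_mem_bools (s : seq bool) : all (mem bools) s.
Proof. by apply/allP => -[]. Qed.

Definition one_differs (l : bool) (v : seq bool) : bool :=
  count (fun c => c != l) v == 1.

Lemma count_one_differs l : count (one_differs l) (words bools 3) = 3.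
Proof. by case: l. Qed.

(* [l] is the value on the left crease of the next vertex, and [nth false v 1]
   the value on its right crease. *)
Fixpoint valid_chain (l : bool) (vs : seq (seq bool)) : bool :=
  if vs is v :: vs' then one_differs l v && valid_chain (nth false v 1) vs' else true.

Lemma count_valid_chain l m : count (valid_chain l) (words (words bools 3) m) = 3 ^ m.
Proof.
elim: m l => [|m IHm] l //; rewrite count_wordsS.
rewrite (eq_bigr (fun v => if one_differs l v then 3 ^ m else 0)) => [|v _].
  by rewrite -big_mkcond big_const_seq iter_addn_0 count_one_differs expnSr.
by rewrite /=; case: (one_differs l v); [exact: IHm | exact: count_pred0].
Qed.

Lemma valid_chain_map_iota (f : nat -> bool) (g : nat -> seq bool) j m :
    (forall k, nth false (g k) 1 = f k.+1) ->
  valid_chain (f j) (map g (iota j m)) = all (fun k => one_differs (f k) (g k)) (iota j m).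
Proof. by move=> gf; elim: m j => //= m IHm j; rewrite gf IHm. Qed.

Section Encoding.
Variable n : nat.
Implicit Types (mu : mvassign n) (p : bool * seq (seq bool)).

Lemma mu_at_crease mu (e : crease n) : mu_at mu (val (val e)) = mu e.
Proof.
rewrite /mu_at; case: pickP => [e' /eqP e'e | /(_ e)]; last by rewrite eqxx.
by congr (mu _); do 2!apply: val_inj.
Qed.

Lemma crease_exists c : c < 3 * n - 1 -> c != 1 -> exists e : crease n, val (val e) = c.
Proof. by move=> c_lt c_ne1; exists (exist _ (Ordinal c_lt) c_ne1). Qed.

Definition vertex_creases mu (k : nat) : seq bool :=
  [seq mu_at mu c | c <- [:: 3 * k - 1; 3 * k; 3 * k + 1]].

Lemma nth_vertex_creases mu k j : 0 < k -> j < 3 ->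
  nth false (vertex_creases mu k) j = mu_at mu (3 * k - 1 + j).
Proof. by move=> k_gt0; case: j => [|[|[|j]]] // _; congr (mu_at mu _); lia. Qed.

Definition encode mu : bool * seq (seq bool) :=
  (mu_at mu 0, map (vertex_creases mu) (iota 1 n.-1)).

Lemma locally_valid_encode mu : locally_valid mu = valid_chain (encode mu).1 (encode mu).2.
Proof.
transitivity (all (fun k => one_differs (mu_at mu (3 * k - 3)) (vertex_creases mu k))
                 (iota 1 n.-1)).
  exact: forall_ord_gt0_iota.
rewrite -(valid_chain_map_iota (f := fun k => mu_at mu (3 * k - 3))) // => k.
by congr (mu_at mu _); lia.
Qed.

(* For c >= 2, e_c is crease j of vertex x_k, where c + 1 = 3 k + j. *)
Definition crease_value p (c : nat) : bool :=
  if c is 0 then p.1 else nth false (nth [::] p.2 (c.+1 %/ 3).-1) (c.+1 %% 3).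

Lemma crease_value_vertex p k j : 0 < k -> j < 3 ->
  crease_value p (3 * k - 1 + j) = nth false (nth [::] p.2 k.-1) j.
Proof.
move=> k_gt0 j_lt3; case def_c: (3 * k - 1 + j) => [|c] /=; first by lia.
suff [-> ->] : c.+2 %/ 3 = k /\ c.+2 %% 3 = j by [].
by lia.
Qed.

Lemma crease_value_encode mu c : c < 3 * n - 1 -> c != 1 ->
  crease_value (encode mu) c = mu_at mu c.
Proof.
case: c => [|[|c]] // c_lt _.
have [k [j [k_gt0 j_lt3 def_c]]] : exists k j, [/\ 0 < k, j < 3 & c.+2 = 3 * k - 1 + j].
  by exists (c.+3 %/ 3), (c.+3 %% 3); split; lia.
rewrite def_c crease_value_vertex // (nth_map 0) ?size_iota; last by lia.
by rewrite nth_iota ?add1n ?prednK ?nth_vertex_creases //; lia.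
Qed.

Lemma encode_inj : injective encode.
Proof.
move=> mu nu enc_eq; apply/ffunP => e.
have e_lt := ltn_ord (val e); have e_ne1 := valP e.
by rewrite -!mu_at_crease -!crease_value_encode // enc_eq.
Qed.

Definition encodings : seq (bool * seq (seq bool)) :=
  [seq (x, vs) | x <- bools, vs <- words (words bools 3) n.-1].

Lemma encodings_uniq : uniq encodings.
Proof. by apply: allpairs_uniq; rewrite ?words_uniq // => -[? ?] [? ?] _ _ [-> ->]. Qed.

Lemma count_valid_encodings :
  count (fun p => valid_chain p.1 p.2) encodings = 2 * 3 ^ n.-1.
Proof. by rewrite count_allpairs !big_cons big_nil !count_valid_chain addn0 mul2n addnn. Qed.

Lemma encode_mem mu : encode mu \in encodings.
Proof.
apply: allpairs_f; first by case: (mu_at mu 0).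
rewrite mem_words size_map size_iota eqxx.
apply/allP => _ /mapP[k _ ->]; change (vertex_creases mu k \in words bools 3).
by rewrite mem_words all_mem_bools.
Qed.

Definition decode p : mvassign n := [ffun e => crease_value p (val (val e))].

Lemma mu_at_decode p c : c < 3 * n - 1 -> c != 1 -> mu_at (decode p) c = crease_value p c.
Proof. by move=> c_lt c_ne1; have [e <-] := crease_exists c_lt c_ne1; rewrite mu_at_crease ffunE. Qed.

Lemma decodeK : 0 < n -> {in encodings, cancel decode encode}.
Proof.
move=> n_gt0 _ /allpairsP[[x vs] [_ /= + ->]].
rewrite mem_words => /andP[/eqP size_vs /allP vs3].
congr pair; first by rewrite mu_at_decode //; lia.
apply: (eq_from_nth (x0 := [::])); first by rewrite size_map size_iota.
rewrite size_map size_iota => i i_lt; rewrite (nth_map 0) ?size_iota // nth_iota // add1n.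
have : nth [::] vs i \in words bools 3 by apply: vs3; rewrite mem_nth ?size_vs.
rewrite mem_words => /andP[/eqP v3 _].
apply: (eq_from_nth (x0 := false)); first by rewrite v3.
move=> j /= j_lt3; rewrite nth_vertex_creases // mu_at_decode ?crease_value_vertex //; lia.
Qed.

End Encoding.

Theorem theorem3p1 (n : nat) : 1 <= n -> #|OFG_vertices n| = 2 * 3 ^ (n - 1).
Proof.
move=> n_gt0.
have -> : #|OFG_vertices n| = #|preim (@encode n) (fun p => valid_chain p.1 p.2)|.
  by apply: eq_card => mu; rewrite inE locally_valid_encode.
rewrite (card_preim_count _ (@encode_inj n) (encodings_uniq n) (@encode_mem n) (decodeK n_gt0)).
by rewrite count_valid_encodings subn1.
Qed.
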